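(* Let $\mathcal{H}$ be finite and let $D$ consist of $n$ i.i.d. samples from $\mathcal{D}$. With probability $1-\delta$, for all $f\in\Delta(\mathcal{H})$ and all $\lambda\in\Lambda_C$, $|\mathcal{L}_{\mathcal{D}}(f,\lambda)-\mathcal{L}_D(f,\lambda)|\le\sqrt{\frac{\ln(4|\mathcal{H}|/\delta)}{2n}}+C\sqrt{\frac{8\ln(4|\mathcal{H}|Ndm/\delta)}{n}}.$
   Context: Data $(x,y)\in\mathcal{X}\times[-1,1]^d$ drawn from $\mathcal{D}$; $\mathcal{H}$ a class of functions $h:\mathcal{X}\to[-1,1]^d$. Receivers $i\in[N]$ have finite action sets $\mathcal{A}_i$, $|\mathcal{A}_i|=m$, utilities $v_i:\mathcal{A}_i\times[-1,1]^d\to[0,1]$; $b_i(z,a)=1$ if $a=\arg\max_{a'}v_i(a',z)$ (fixed tie-breaking), else $0$; $b(z,\mathbf a)=\prod_ib_i(z,a_i)$, $\mathcal{A}=\prod_i\mathcal{A}_i$; sender utility $u:\mathcal{A}\times[-1,1]^d\to[0,1]$; $\gamma\ge0$. $I=\{(s,i,j,a):s\in\{\pm1\},i\in[N],j\in[d],a\in\mathcal{A}_i\}$, $\Lambda_C=\{\lambda\in\mathbb{R}_{\ge0}^I:\|\lambda\|_1\le C\}$. For a distribution $P$ (either $\mathcal{D}$ or the empirical distribution of $D$), $\mathcal{L}_P(f,\lambda)=-\mathbb{E}_{h\sim f}\mathbb{E}_P[\sum_{\mathbf a}u(\mathbf a,y)b(h(x),\mathbf a)]+\sum_{(s,i,j,a)\in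 I}\lambda_{s,i,j,a}\,s\big(\mathbb{E}_{h\sim f}\mathbb{E}_P[(h(x)_j-y_j)b_i(h(x),a)]-\gamma\big)$. *)

From HB Require Import structures.
From mathcomp Require Import all_boot all_order all_algebra.
From mathcomp Require Import all_classical all_reals all_analysis.
Set Implicit Arguments. Unset Strict Implicit. Unset Printing Implicit Defensive.
Import Order.TTheory GRing.Theory Num.Theory.
Local Open Scope ring_scope.

Definition sgn (R : realType) (s : bool) : R := if s then 1 else -1.

Definition bi (R : realType) (N d m : nat) (br : 'I_N -> ('I_d -> R) -> 'I_m)
  (i : 'I_N) (z : 'I_d -> R) (a : 'I_m) : R := (br i z == a)%:R.

Definition bjoint (R : realType) (N d m : nat) (br : 'I_N -> ('I_d -> R) -> 'I_m)
  (z : 'I_d -> R) (a : {ffun 'I_N -> 'I_m}) : R := \prod_(i < N) bi br i z (a i).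

Definition sender_val (R : realType) (N d m : nat) (br : 'I_N -> ('I_d -> R) -> 'I_m)
  (u : {ffun 'I_N -> 'I_m} -> ('I_d -> R) -> R) (z y : 'I_d -> R) : R :=
  \sum_(a : {ffun 'I_N -> 'I_m}) u a y * bjoint br z a.

(* Delta(H): probability weights on the (finite, indexed) hypothesis class *)
Definition in_simplex (R : realType) (I : finType) (w : I -> R) : Prop :=
  (forall k, 0 <= w k) /\ \sum_(k : I) w k = 1.

(* Lambda_C, index set I = {+-1} x [N] x [d] x A_i *)
Definition in_LambdaC (R : realType) (N d m : nat) (C : R)
  (lam : bool * 'I_N * 'I_d * 'I_m -> R) : Prop :=
  (forall q, 0 <= lam q) /\ \sum_(q : bool * 'I_N * 'I_d * 'I_m) lam q <= C.

(* The Lagrangian L_P(f, lambda), where E is the expectation operator of P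
   (E_P[g] for g a function of the data point t = (x,y)). *)
Definition lagrangian (R : realType) (T X : Type) (N d m : nat) (I : finType)
  (hyp : I -> X -> 'I_d -> R) (xof : T -> X) (yof : T -> 'I_d -> R)
  (br : 'I_N -> ('I_d -> R) -> 'I_m) (u : {ffun 'I_N -> 'I_m} -> ('I_d -> R) -> R)
  (gamma : R) (E : (T -> R) -> R) (w : I -> R)
  (lam : bool * 'I_N * 'I_d * 'I_m -> R) : R :=
  - (\sum_(k : I) w k * E (fun t => sender_val br u (hyp k (xof t)) (yof t)))
  + \sum_(q : bool * 'I_N * 'I_d * 'I_m)
      let: (s, i, j, a) := q in
      lam q * (sgn R s *
        (\sum_(k : I) w k *
            E (fun t => (hyp k (xof t) j - yof t j) * bi br i (hyp k (xof t)) a)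
         - gamma)).

Definition popE (R : realType) (dT : measure_display) (T : measurableType dT)
  (Dist : probability T R) (g : T -> R) : R := Rintegral Dist setT g.

Definition empE (R : realType) (T : Type) (n : nat) (z : 'I_n -> T) (g : T -> R) : R :=
  n%:R^-1 * \sum_(s < n) g (z s).

Definition iid_samples (R : realType) (dO : measure_display) (Omega : measurableType dO)
  (P : probability Omega R) (dT : measure_display) (T : measurableType dT)
  (Dist : probability T R) (n : nat) (Z : 'I_n -> Omega -> T) : Prop :=
  (forall s, measurable_fun setT (Z s)) /\
  forall B : 'I_n -> set T, (forall s, measurable (B s)) ->
    P [set om : Omega | forall s : 'I_n, B s (Z s om)]%classic = (\prod_(s < n) fine (Dist (B s)))%:E.

(* Each expectation entering the Lagrangian, [E[sender_val (h_k x) y]] for [k] in [H] and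
   [E[(h_k(x)_j - y_j) b_i(h_k(x), a)]] for every [(k, i, j, a)], is estimated within the
   stated radius outside an event of probability [delta / 2] per family, by Hoeffding's
   inequality and a union bound.  Outside both events the Lagrangian difference is an
   [f]-average of deviations of the first kind plus a [lambda]-weighted sum
   ([|lambda|_1 <= C]) of deviations of the second kind; [gamma] cancels.

   Hoeffding's inequality is derived from [iid_samples], which gives the product rule on
   cylinders only.  For a function with finitely many values the tail event is a finite
   union of cylinders, so the Chernoff bound is a finite sum of products, controlled by
   Hoeffding's lemma.  A bounded measurable function is discretized with mesh
   [(b - a) / K.+1]; this costs the mesh in the deviation, and [K] then goes to infinity. *)

From HB Require Import structures.
From mathcomp Require Import all_boot all_order all_algebra.
From mathcomp Require Import all_classical all_reals all_analysis.
From mathcomp Require Import ring lra measurable_realfun.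
Set Implicit Arguments. Unset Strict Implicit. Unset Printing Implicit Defensive.
Import Order.TTheory GRing.Theory Num.Theory.
Import numFieldNormedType.Exports.
Local Open Scope classical_set_scope.
Local Open Scope ring_scope.

Section exponential_bounds.
Variable R : realType.

Lemma ge0_is_derive_ndecr (f df : R -> R) (a b : R) :
  (forall x, is_derive x (1 : R) f (df x)) -> (forall x, a <= x <= b -> 0 <= df x) ->
  a <= b -> f a <= f b.
Proof.
move=> fdf df0 ab.
have fcont : {within `[a, b], continuous f}.
  apply/continuous_subspaceT => x; apply/differentiable_continuous/derivable1_diffP.
  by case: (fdf x).
have [c /[1!in_itv] /= /df0 dfc] := MVT_segment ab (fun x _ => fdf x) fcont.
by rewrite -subr_ge0 => ->; rewrite mulr_ge0 // subr_ge0.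
Qed.

Lemma expRM_le_chord (p y : R) : 0 <= p <= 1 -> expR (p * y) <= 1 - p + p * expR y.
Proof.
case/andP=> p0 p1; have := convex_expR (Itv01 p0 p1) y 0.
by rewrite !convRE /= mulr0 addr0 expR0 mulr1 addrC.
Qed.

Lemma bernoulli_mgf_gt0 (p y : R) : 0 <= p <= 1 -> 0 < 1 - p + p * expR y.
Proof. by move=> /(expRM_le_chord y); apply: lt_le_trans; exact: expR_gt0. Qed.

Lemma bernoulli_mgf_le (p u : R) : 0 <= p <= 1 -> 0 <= u ->
  1 - p + p * expR u <= expR (p * u + u ^+ 2 / 8).
Proof.
move=> p01 u0.
pose D y := 1 - p + p * expR y.
have D_gt0 y : 0 < D y := bernoulli_mgf_gt0 y p01.
have dD x : is_derive x (1 : R) D (p * expR x).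
  by have := is_deriveD (is_derive_cst (1 - p) x 1) (is_deriveZ p (is_derive_expR x));
    rewrite add0r.
pose G' y := p + 4^-1 * y - 1 + (1 - p) / D y.
have dG' x : is_derive x (1 : R) G' (1 / 4 - (1 - p) * (p * expR x) / D x ^+ 2).
  have dlin : is_derive x (1 : R) (fun y => p + 4^-1 * y - 1) (1 / 4).
    have dsum := is_deriveB (is_deriveD (is_derive_cst p x 1)
      (is_deriveZ (4 : R)^-1 (is_derive_id x (1 : R)))) (is_derive_cst (1 : R) x 1).
    by apply: is_derive_eq dsum _; rewrite /GRing.scale /=; field.
  have dsum := is_deriveD dlin (is_deriveZ (1 - p) (is_deriveV (lt0r_neq0 (D_gt0 x)) (dD x))).
  apply: is_derive_eq dsum _; rewrite /GRing.scale /=; field.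
  by rewrite lt0r_neq0.
have G'_ge0 x : 0 <= x -> 0 <= G' x.
  move=> x0; have <- : G' 0 = 0 by rewrite /G' /D expR0 mulr1 subrK divr1 mulr0; ring.
  apply: ge0_is_derive_ndecr dG' _ x0 => y _.
  (* AM-GM: [4 (1 - p) (p e^y) <= D y ^+ 2] *)
  have -> : 1 / 4 - (1 - p) * (p * expR y) / D y ^+ 2
      = (1 - p - p * expR y) ^+ 2 / (4 * D y ^+ 2).
    by rewrite /D; field; exact: lt0r_neq0 (D_gt0 y).
  by apply: divr_ge0; [exact: sqr_ge0 | apply: mulr_ge0 => //; exact: sqr_ge0].
pose G y := p * y + 8^-1 * y ^+ 2 - ln (D y).
have dG x : is_derive x (1 : R) G (G' x).
  have dsum := is_deriveB (is_deriveD (is_deriveZ p (is_derive_id x (1 : R)))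
    (is_deriveZ (8 : R)^-1 (is_deriveX 2 (is_derive_id x (1 : R)))))
    (is_derive1_comp (is_derive1_ln (D_gt0 x)) (dD x)).
  apply: is_derive_eq dsum _; rewrite /GRing.scale /G' /= expr1.
  by rewrite /D; field; exact: lt0r_neq0 (D_gt0 x).
have : G 0 <= G u.
  by apply: ge0_is_derive_ndecr dG _ u0 => x /andP[x0 _]; exact: G'_ge0.
have -> : G 0 = 0 by rewrite /G /D expR0 mulr1 subrK ln1 expr0n /= !mulr0 !addr0 subr0.
rewrite /G subr_ge0 -ler_expR lnK ?posrE // => /le_trans; apply.
by rewrite [u ^+ 2 / 8]mulrC.
Qed.

Lemma hoeffding_lemma (V : finType) (pi val : V -> R) (a b l : R) :
  (forall v, 0 <= pi v) -> \sum_v pi v = 1 -> (forall v, a <= val v <= b) ->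
  a < b -> 0 <= l ->
  \sum_v pi v * expR (l * val v)
    <= expR (l * (\sum_v pi v * val v) + l ^+ 2 * (b - a) ^+ 2 / 8).
Proof.
move=> pi0 pi1 val_ab ab l0.
set c := b - a; have c0 : 0 < c by rewrite subr_gt0.
pose w v := (val v - a) / c.
have w01 v : 0 <= w v <= 1.
  have /andP[av vb] := val_ab v.
  rewrite /w ler_pdivrMr // mul1r lerD2r vb andbT.
  by apply: divr_ge0; [rewrite subr_ge0 | exact: ltW].
set p := \sum_v pi v * w v.
have p01 : 0 <= p <= 1.
  rewrite sumr_ge0 => [|v _]; last by rewrite mulr_ge0 //; case/andP: (w01 v).
  rewrite -pi1 ler_sum // => v _.
  by rewrite ler_piMr //; case/andP: (w01 v).
have chord v : pi v * expR (l * val v)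
    <= expR (l * a) * (pi v - pi v * w v + pi v * w v * expR (l * c)).
  have -> : l * val v = l * a + w v * (l * c) by rewrite /w; field; rewrite lt0r_neq0.
  rewrite expRD mulrCA ler_wpM2l ?expR_ge0 //.
  have -> : pi v - pi v * w v + pi v * w v * expR (l * c)
      = pi v * (1 - w v + w v * expR (l * c)) by ring.
  by rewrite ler_wpM2l // expRM_le_chord.
have pc : p * c = \sum_v pi v * val v - a.
  rewrite /p mulr_suml (eq_bigr (fun v => pi v * val v - a * pi v)) => [|v _].
    by rewrite sumrB -mulr_sumr pi1 mulr1.
  by rewrite /w; field; rewrite lt0r_neq0.
apply: le_trans (ler_sum _ (fun v _ => chord v)) _.
rewrite -mulr_sumr big_split sumrB /= pi1 -mulr_suml -/p.
apply: le_trans (ler_wpM2l (expR_ge0 _) (bernoulli_mgf_le p01 (mulr_ge0 l0 (ltW c0)))) _.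
rewrite -expRD ler_expR le_eqVlt; apply/orP; left; apply/eqP.
have -> : l * (\sum_v pi v * val v) = l * a + l * (p * c) by rewrite pc; ring.
ring.
Qed.

Lemma hoeffding_product (V : finType) (pi val : V -> R) (a b e : R) (n : nat) :
  (forall v, 0 <= pi v) -> \sum_v pi v = 1 -> (forall v, a <= val v <= b) ->
  a < b -> 0 <= e -> (0 < n)%N ->
  \sum_(f : {ffun 'I_n -> V} | n%:R^-1 * \sum_(s < n) val (f s) + e < \sum_v pi v * val v)
      \prod_(s < n) pi (f s)
    <= expR (- (2 * n%:R / (b - a) ^+ 2 * e ^+ 2)).
Proof.
move=> pi0 pi1 val_ab ab e0 n0.
set mu := \sum_v pi v * val v.
set c := b - a; have c0 : 0 < c by rewrite subr_gt0.
have nR : 0 < n%:R :> R by rewrite ltr0n.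
(* the Chernoff parameter minimising [- l e + l^2 c^2 / 8] *)
set l := 4 * e / c ^+ 2.
have l0 : 0 <= l by rewrite divr_ge0 ?sqr_ge0 ?mulr_ge0.
pose G v := pi v * expR (- l * val v).
have chernoff (f : {ffun 'I_n -> V}) :
    (if n%:R^-1 * \sum_(s < n) val (f s) + e < mu then \prod_(s < n) pi (f s) else 0)
    <= expR (l * n%:R * (mu - e)) * \prod_(s < n) G (f s).
  have -> : expR (l * n%:R * (mu - e)) * \prod_(s < n) G (f s)
      = \prod_(s < n) pi (f s) * expR (l * (n%:R * (mu - e) - \sum_(s < n) val (f s))).
    rewrite big_split /= mulrCA -expR_sum -expRD; congr (_ * expR _).
    rewrite [RHS]mulrBr mulrA mulr_sumr -sumrN; congr (_ + _).
    by apply: eq_bigr => s _; rewrite mulNr.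
  have prod_ge0 : 0 <= \prod_(s < n) pi (f s) by exact: prodr_ge0.
  case: ifP => [tail|_]; last by rewrite mulr_ge0 ?expR_ge0.
  rewrite ler_peMr // (le_trans _ (expR_ge1Dx _)) // lerDl mulr_ge0 // subr_ge0.
  by move: tail; rewrite -ltrBrDr mulrC ltr_pdivrMr // mulrC => /ltW.
have mgf : \sum_v G v <= expR (- l * mu + l ^+ 2 * c ^+ 2 / 8).
  have Nval_ab v : - b <= - val v <= - a by rewrite !lerN2 andbC val_ab.
  have Nab : - b < - a by rewrite ltrN2.
  have := hoeffding_lemma pi0 pi1 Nval_ab Nab l0.
  have -> : - a - - b = c by rewrite opprK addrC.
  have -> : \sum_v pi v * - val v = - mu by rewrite -sumrN; apply: eq_bigr => v _; rewrite mulrN.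
  by rewrite mulrN -mulNr; under eq_bigr do rewrite mulrN -mulNr.
rewrite big_mkcond /=; apply: le_trans (ler_sum _ (fun f _ => chernoff f)) _.
rewrite -mulr_sumr -(bigA_distr_bigA (fun _ : 'I_n => G)) /= prodr_const card_ord.
have G_ge0 : 0 <= \sum_v G v by apply: sumr_ge0 => v _; rewrite mulr_ge0 ?expR_ge0.
apply: le_trans (ler_wpM2l (expR_ge0 _) (lerXn2r _ _ _ mgf)) _; rewrite ?nnegrE ?expR_ge0 //.
rewrite -expRM_natl -expRD ler_expR le_eqVlt; apply/orP; left; apply/eqP.
by rewrite /l; field; rewrite lt0r_neq0.
Qed.

Lemma le_expR_of_approx (x e al c : R) : 0 < e ->
  (forall K : nat, c / K.+1%:R < e -> x <= expR (- (al * (e - c / K.+1%:R) ^+ 2))) ->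
  x <= expR (- (al * e ^+ 2)).
Proof.
move=> e0 approx.
have c_harmonic : (fun K : nat => c / K.+1%:R) @ \oo --> 0.
  by rewrite -(mulr0 c); apply: cvgMr; exact: cvg_harmonic.
have approx_cvg : (fun K : nat => expR (- (al * (e - c / K.+1%:R) ^+ 2))) @ \oo
    --> expR (- (al * e ^+ 2)).
  apply: continuous_cvg; first exact: continuous_expR.
  apply: cvgN; apply: cvgMr; rewrite expr2.
  have e_cvg : (fun K : nat => e - c / K.+1%:R) @ \oo --> e.
    by rewrite -[X in _ --> X]subr0; apply: cvgB => //; exact: cvg_cst.
  by under eq_fun do rewrite expr2; apply: cvgM.
apply: cvgr_to_ge approx_cvg _; near=> K; apply: approx.
by near: K; exact: cvgr_lt c_harmonic _ e0.
Unshelve. all: by end_near.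
Qed.
End exponential_bounds.

Lemma normr_le_bounds (R : realDomainType) (a b x : R) : a <= x <= b -> `|x| <= `|a| + `|b|.
Proof.
case/andP=> ax xb; have := ler_norm (- a); have := ler_norm b.
have := normr_ge0 a; have := normr_ge0 b; rewrite normrN ler_norml; lra.
Qed.

Lemma sum_indic_fiber (R : realType) (T : Type) (V : finType) (iota : T -> V) (h : V -> R) t :
  \sum_v h v * \1_[set t | iota t = v] t = h (iota t).
Proof.
rewrite (bigD1 (iota t)) //= big1 ?addr0 => [|v /eqP vt].
  by rewrite indicE mem_set // mulr1.
by rewrite indicE memNset ?mulr0 // => /esym.
Qed.

Section fibers.
Variables (R : realType) (dT : measure_display) (T : measurableType dT).
Variable Dist : probability T R.

Lemma bounded_integrable (f : T -> R) (M : R) :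
  measurable_fun setT f -> (forall t, `|f t| <= M) -> Dist.-integrable setT (EFin \o f).
Proof.
move=> mf fM; apply: measurable_bounded_integrable => //.
  by rewrite (le_lt_trans (probability_le1 Dist measurableT)) // ltry.
exists M; split; first by rewrite num_real.
by move=> x Mx t _; exact: le_trans (fM t) (ltW Mx).
Qed.

Lemma measurable_comp_fin (V : finType) (iota : T -> V) (h : V -> R) :
  (forall v, measurable [set t | iota t = v]) -> measurable_fun setT (h \o iota).
Proof.
move=> mfiber; have -> : h \o iota = fun t => \sum_v h v * \1_[set t | iota t = v] t.
  by apply/funext => t; rewrite sum_indic_fiber.
by apply: measurable_sum => v; apply: measurable_funM => //; exact: measurable_indic.
Qed.

Lemma Rintegral_comp_fin (V : finType) (iota : T -> V) (h : V -> R) :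
  (forall v, measurable [set t | iota t = v]) ->
  Rintegral Dist setT (h \o iota) = \sum_v h v * fine (Dist [set t | iota t = v]).
Proof.
move=> mfiber.
have -> : h \o iota = fun t => \sum_v h v * \1_[set t | iota t = v] t.
  by apply/funext => t; rewrite sum_indic_fiber.
have step_int (r : R) v :
    Dist.-integrable setT (EFin \o (fun t => r * \1_[set t | iota t = v] t)).
  apply: (@bounded_integrable _ `|r|) => [|t].
    by apply: measurable_funM => //; exact: measurable_indic.
  by rewrite normrM ler_piMr // indicE; case: (_ \in _); rewrite ?normr1 ?normr0.
elim: (index_enum V) => [|v s IH].
  by under eq_Rintegral do rewrite big_nil; rewrite big_nil Rintegral_cst // mul0r.
under eq_Rintegral do rewrite big_cons.
rewrite big_cons RintegralD // ?IH ?RintegralZl //; first last.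
- apply: (@bounded_integrable _ (\sum_(w <- s) `|h w|)) => [|t].
    by apply: measurable_sum => w; apply: measurable_funM => //; exact: measurable_indic.
  apply: le_trans (ler_norm_sum _ _ _) (ler_sum _ _) => w _.
  by rewrite normrM ler_piMr // indicE; case: (_ \in _); rewrite ?normr1 ?normr0.
- by have := step_int 1 v; congr (_.-integrable _ _); apply/funext => t /=; rewrite mul1r.
by rewrite /Rintegral integral_indic // setIT.
Qed.

Lemma sum_fiber_prob (V : finType) (iota : T -> V) :
  (forall v, measurable [set t | iota t = v]) ->
  \sum_v fine (Dist [set t | iota t = v]) = 1.
Proof.
move=> mfiber; have := Rintegral_comp_fin (fun _ => 1) mfiber.
rewrite Rintegral_cst // mul1r => total.
transitivity (fine (Dist setT)); last by rewrite probability_setT.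
by rewrite total; apply: eq_bigr => v _; rewrite mul1r.
Qed.
End fibers.

Lemma discretize_bounded (R : realType) (dT : measure_display) (T : measurableType dT)
    (g : T -> R) (a b : R) (K : nat) :
  measurable_fun setT g -> (forall t, a <= g t <= b) -> a < b -> (0 < K)%N ->
  exists (iota : T -> 'I_K.+1) (val : 'I_K.+1 -> R),
    [/\ forall v, measurable [set t | iota t = v],
        forall v, a <= val v <= b &
        forall t, val (iota t) <= g t <= val (iota t) + (b - a) / K%:R].
Proof.
move=> mg g_ab ab K0.
set c := b - a; have c0 : 0 < c by rewrite subr_gt0.
have KR : 0 < K%:R :> R by rewrite ltr0n.
(* [w] rescales [[a, b]] onto [[0, K]]; cell [v] is [w^-1 [v, v + 1[] *)
pose w t := K%:R * (g t - a) / c.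
have mw : measurable_fun setT w.
  apply: measurable_funM => //; apply: measurable_funM => //.
  exact: measurable_funB.
have w0K t : 0 <= w t <= K%:R.
  have /andP[agt gtb] := g_ab t.
  rewrite ler_pdivrMr // ler_pM2l // lerD2r gtb andbT.
  by apply: divr_ge0; rewrite ?mulr_ge0 ?subr_ge0 // ltW.
have truncK t : (Num.truncn (w t) < K.+1)%N.
  have /andP[_ wK] := w0K t.
  by rewrite ltnS truncn_le_nat (le_lt_trans wK) // ltr_nat.
pose iota t : 'I_K.+1 := Ordinal (truncK t).
pose val (v : 'I_K.+1) := a + c * v%:R / K%:R.
have gE t : g t = a + c * w t / K%:R by rewrite /w; field; rewrite !lt0r_neq0.
exists iota, val; split => [v | v | t].
- have -> : [set t | iota t = v] = setT `&` (w @^-1` `[v%:R, v.+1%:R[).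
    apply/seteqP; split => t /=; have /andP[w0 _] := w0K t.
      by move=> <-; split => //; rewrite in_itv /= -truncn_eq.
    by case=> _; rewrite in_itv /= -truncn_eq // => /eqP tv; apply: val_inj.
  exact: mw measurableT _ (measurable_itv _).
- have vK : v%:R <= K%:R :> R by rewrite ler_nat -ltnS.
  rewrite /val lerDl ?divr_ge0 ?mulr_ge0 ?(ltW c0) ?(ltW KR) //=.
  by rewrite -lerBrDl -/c ler_pdivrMr // ler_pM2l.
- have /andP[w0 _] := w0K t.
  have lo : (Num.truncn (w t))%:R <= w t by rewrite truncn_le.
  have hi := truncnS_gt (w t); rewrite -natr1 in hi.
  have cK : 0 < c / K%:R by rewrite divr_gt0.
  have scale x : c * x / K%:R = c / K%:R * x by rewrite mulrAC mulrC.
  rewrite gE /val /= !scale.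
  rewrite !lerD2l ler_pM2l // lo /= -addrA lerD2l -[X in _ + X]mulr1 -mulrDr.
  by rewrite ler_pM2l // ltW.
Qed.

Lemma measurable_ltr d (X : measurableType d) (R : realType) (f g : X -> R) :
  measurable_fun setT f -> measurable_fun setT g -> measurable [set x | f x < g x].
Proof.
move=> mf mg; rewrite -[X in measurable X]setTI.
exact: (measurable_fun_ltr mf mg) measurableT [set true] I.
Qed.

Lemma measure_bigsetU_le d (X : measurableType d) (R : realType)
    (mu : {measure set X -> \bar R}) (I : Type) (r : seq I) (Q : pred I) (F : I -> set X) :
  (forall i, measurable (F i)) ->
  (mu (\big[setU/set0]_(i <- r | Q i) F i) <= (\sum_(i <- r | Q i) mu (F i))%E)%E.
Proof.
move=> mF; elim: r => [|i r IH]; first by rewrite !big_nil measure0.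
rewrite !big_cons; case: (Q i) => //.
apply: le_trans (measureU2 _ _ _) (leeD _ IH) => //.
exact: bigsetU_measurable.
Qed.

Lemma probability_setCU_ge d (X : measurableType d) (R : realType) (P : probability X R)
    (A B : set X) (a b : R) :
  measurable A -> measurable B -> (P A <= a%:E)%E -> (P B <= b%:E)%E ->
  ((1 - (a + b))%:E <= P (~` (A `|` B)))%E.
Proof.
move=> mA mB PA PB; have mAB : measurable (A `|` B) by exact: measurableU.
have PAB : (P (A `|` B) <= (a + b)%:E)%E.
  by apply: le_trans (measureU2 _ mA mB) _; rewrite EFinD leeD.
rewrite probability_setC // -(fineK (fin_num_measure P _ mAB)) -EFinB lee_fin lerD2l lerN2.
by rewrite -lee_fin fineK // fin_num_measure.
Qed.

(* Solves [k * 2 exp (- 2 n e^2 / w^2) = delta] for [e]: the Hoeffding radius for [k] events. *)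
Definition deviation_radius (R : realType) (w : R) (k n : nat) (delta : R) : R :=
  Num.sqrt (w ^+ 2 * ln (2 * k%:R / delta) / (2 * n%:R)).

Section deviation_radius.
Variables (R : realType) (w delta : R) (k n : nat).

Lemma deviation_radius_half : delta != 0 ->
  deviation_radius w k n (delta / 2) = Num.sqrt (w ^+ 2 * ln (4 * k%:R / delta) / (2 * n%:R)).
Proof.
by move=> delta0; rewrite /deviation_radius; congr (Num.sqrt (_ * ln _ / _)); field.
Qed.

Hypotheses (w0 : 0 < w) (delta0 : 0 < delta) (delta1 : delta < 1).
Hypotheses (k0 : (0 < k)%N) (n0 : (0 < n)%N).

Let nR : 0 < n%:R :> R. Proof. by rewrite ltr0n. Qed.
Let kR : 1 <= k%:R :> R. Proof. by rewrite ler1n. Qed.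

Let ln_radius_gt0 : 0 < ln (2 * k%:R / delta).
Proof.
rewrite ln_gt0 // ltr_pdivlMr // mul1r (lt_le_trans delta1) //.
by apply: le_trans kR _; rewrite ler_peMl // ler1n.
Qed.

Lemma deviation_radius_gt0 : 0 < deviation_radius w k n delta.
Proof. by rewrite sqrtr_gt0 divr_gt0 ?mulr_gt0 ?exprn_gt0. Qed.

Lemma expR_deviation_radius :
  2 * expR (- (2 * n%:R / w ^+ 2 * deviation_radius w k n delta ^+ 2)) = delta / k%:R.
Proof.
rewrite sqr_sqrtr; last by rewrite ltW // divr_gt0 ?mulr_gt0 ?exprn_gt0.
have -> : 2 * n%:R / w ^+ 2 * (w ^+ 2 * ln (2 * k%:R / delta) / (2 * n%:R))
    = ln (2 * k%:R / delta) by field; rewrite !lt0r_neq0.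
have k_gt0 : 0 < k%:R :> R := lt_le_trans ltr01 kR.
rewrite expRN lnK ?posrE ?divr_gt0 ?mulr_gt0 //.
by rewrite invf_div; field; rewrite !lt0r_neq0.
Qed.
End deviation_radius.

Section samples.
Variables (R : realType) (dT : measure_display) (T : measurableType dT).
Variable Dist : probability T R.
Variables (dO : measure_display) (Omega : measurableType dO) (P : probability Omega R).
Variables (n : nat) (Z : 'I_n -> Omega -> T).
Hypothesis iidZ : iid_samples P Dist Z.

Local Notation emp om := (empE (fun s => Z s om)).

Lemma measurable_emp (g : T -> R) :
  measurable_fun setT g -> measurable_fun setT (fun om => emp om g).
Proof.
move=> mg; apply: measurable_funM => //; apply: measurable_sum => s.
exact: measurableT_comp mg (iidZ.1 s).
Qed.

Lemma measurable_tail (g : T -> R) (e : R) :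
  measurable_fun setT g -> measurable [set om | emp om g + e < popE Dist g].
Proof.
move=> mg; apply: measurable_ltr => //; apply: measurable_funD => //.
exact: measurable_emp.
Qed.

Lemma measurable_sample_fibers (V : finType) (iota : T -> V) (f : 'I_n -> V) :
  (forall v, measurable [set t | iota t = v]) ->
  measurable [set om | forall s, iota (Z s om) = f s].
Proof.
move=> mfiber.
have -> : [set om | forall s, iota (Z s om) = f s]
    = \bigcap_(s in [set: 'I_n]) (Z s @^-1` [set t | iota t = f s]).
  by apply/seteqP; split => om /= fom s => [_|]; exact: fom.
apply: fin_bigcap_measurable => [|s _]; first exact: finite_finset.
by rewrite -[X in measurable X]setTI; exact: (iidZ.1 s) measurableT _ (mfiber (f s)).
Qed.

Lemma hoeffding_fin_valued (V : finType) (iota : T -> V) (val : V -> R) (a b e : R) :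
  (forall v, measurable [set t | iota t = v]) -> (forall v, a <= val v <= b) ->
  a < b -> 0 <= e -> (0 < n)%N ->
  (P [set om | (emp om (val \o iota) + e < popE Dist (val \o iota))%R]
    <= (expR (- (2 * n%:R / (b - a) ^+ 2 * e ^+ 2)))%:E)%E.
Proof.
move=> mfiber val_ab ab e0 n0.
pose pi v := fine (Dist [set t | iota t = v]).
have popE_fin : popE Dist (val \o iota) = \sum_v pi v * val v.
  by rewrite /popE Rintegral_comp_fin //; apply: eq_bigr => v _; rewrite mulrC.
pose tail (f : {ffun 'I_n -> V}) := n%:R^-1 * \sum_(s < n) val (f s) + e < \sum_v pi v * val v.
pose cylinder (f : {ffun 'I_n -> V}) := [set om | forall s, iota (Z s om) = f s].
have -> : [set om | emp om (val \o iota) + e < popE Dist (val \o iota)]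
    = \big[setU/set0]_(f | tail f) cylinder f.
  rewrite popE_fin -bigcup_seq_cond; apply/seteqP; split => om /=.
    move=> om_tail; exists [ffun s => iota (Z s om)]; last by move=> s; rewrite ffunE.
    by rewrite /= mem_index_enum /tail; under eq_bigr do rewrite ffunE.
  move=> [f /andP[_]]; rewrite /tail /empE => + om_f.
  suff -> : \sum_(s < n) (val \o iota) (Z s om) = \sum_(s < n) val (f s) by [].
  by apply: eq_bigr => s _; rewrite /= om_f.
have mcylinder f : measurable (cylinder f) := measurable_sample_fibers f mfiber.
apply: le_trans (measure_bigsetU_le _ _ _ mcylinder) _.
rewrite (eq_bigr (fun f : {ffun 'I_n -> V} => (\prod_(s < n) pi (f s))%:E)) => [|f _]; last first.
  exact: iidZ.2 (fun s => [set t | iota t = f s]) (fun s => mfiber (f s)).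
rewrite sumEFin lee_fin; apply: hoeffding_product => // [v|].
  exact: fine_ge0 (measure_ge0 _ _).
exact: sum_fiber_prob.
Qed.

Lemma hoeffding_upper_tail (g : T -> R) (a b e : R) :
  measurable_fun setT g -> (forall t, a <= g t <= b) -> a < b -> 0 < e -> (0 < n)%N ->
  (P [set om | (emp om g + e < popE Dist g)%R]
    <= (expR (- (2 * n%:R / (b - a) ^+ 2 * e ^+ 2)))%:E)%E.
Proof.
move=> mg g_ab ab e0 n0.
set c := b - a; have c0 : 0 < c by rewrite subr_gt0.
set tail := [set om | _].
have mtail : measurable tail := measurable_tail e mg.
have tail_fin : P tail \is a fin_num := fin_num_measure P tail mtail.
rewrite -(fineK tail_fin) lee_fin; apply: (le_expR_of_approx (c := c) e0) => K cKe.
set h := c / K.+1%:R.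
have [iota [val [mfiber val_ab approx]]] := discretize_bounded mg g_ab ab (ltn0Sn K).
have emp_le om : emp om (val \o iota) <= emp om g.
  rewrite ler_wpM2l ?invr_ge0 // ler_sum // => s _.
  by have /andP[] := approx (Z s om).
have pop_le : popE Dist g <= popE Dist (val \o iota) + h.
  have -> : popE Dist (val \o iota) + h = popE Dist ((fun v => val v + h) \o iota).
    rewrite /popE !Rintegral_comp_fin //; under [in RHS]eq_bigr do rewrite mulrDl.
    by rewrite big_split /= -mulr_sumr sum_fiber_prob // mulr1.
  apply: le_Rintegral => // [||t _]; last by have /andP[_] := approx t.
  - by apply: (bounded_integrable _ (M := `|a| + `|b|)) => // t; exact: normr_le_bounds.
  - apply: (bounded_integrable _ (M := `|a + h| + `|b + h|)) => [|t].
      by apply: measurable_funD => //; exact: measurable_comp_fin.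
    by apply: normr_le_bounds; rewrite !lerD2r.
have eh0 : 0 <= e - h by rewrite subr_ge0 ltW.
have mval : measurable_fun setT (val \o iota) := measurable_comp_fin val mfiber.
have coarse_tail : tail `<=` [set om | emp om (val \o iota) + (e - h) < popE Dist (val \o iota)].
  rewrite /tail => om /=; have := emp_le om; lra.
have mcoarse := measurable_tail (e - h) mval.
rewrite -lee_fin (fineK tail_fin).
apply: le_trans (le_measure P (mem_set mtail) (mem_set mcoarse) coarse_tail) _.
exact: hoeffding_fin_valued mfiber val_ab ab eh0 n0.
Qed.

Lemma measurable_deviation (g : T -> R) (e : R) : measurable_fun setT g ->
  measurable [set om | e < `|popE Dist g - emp om g|].
Proof.
move=> mg; apply: measurable_ltr => //; apply: measurableT_comp => //.
by apply: measurable_funB => //; exact: measurable_emp.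
Qed.

Lemma hoeffding (g : T -> R) (a b e : R) :
  measurable_fun setT g -> (forall t, a <= g t <= b) -> a < b -> 0 < e -> (0 < n)%N ->
  (P [set om | (e < `|popE Dist g - emp om g|)%R]
    <= (2 * expR (- (2 * n%:R / (b - a) ^+ 2 * e ^+ 2)))%:E)%E.
Proof.
move=> mg g_ab ab e0 n0.
have mNg : measurable_fun setT (fun t => - g t) by exact: measurableT_comp.
have Ng_ab t : - b <= - g t <= - a by rewrite !lerN2 andbC g_ab.
have Nab : - b < - a by rewrite ltrN2.
have popN : popE Dist (fun t => - g t) = - popE Dist g.
  rewrite /popE -mulN1r -RintegralZl //; first by apply: eq_Rintegral => t _; rewrite mulN1r.
  by apply: (bounded_integrable _ (M := `|a| + `|b|)) => // t; exact: normr_le_bounds.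
have empN om : emp om (fun t => - g t) = - emp om g by rewrite /empE sumrN mulrN.
have -> : [set om | e < `|popE Dist g - emp om g|]
    = [set om | emp om g + e < popE Dist g]
      `|` [set om | emp om (fun t => - g t) + e < popE Dist (fun t => - g t)].
  apply/seteqP; split => om /=; rewrite popN empN ltr_normr.
    by case/orP => ?; [left | right]; lra.
  by case=> ?; apply/orP; [left | right]; lra.
apply: le_trans (measureU2 _ (measurable_tail e mg) (measurable_tail e mNg)) _.
rewrite -[2%R]/(1 + 1)%R mulrDl mul1r EFinD; apply: leeD.
  exact: hoeffding_upper_tail mg g_ab ab e0 n0.
by have := hoeffding_upper_tail mNg Ng_ab Nab e0 n0; rewrite opprK addrC.
Qed.

Lemma hoeffding_union (K : finType) (g : K -> T -> R) (a b delta : R) :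
  (forall k, measurable_fun setT (g k)) -> (forall k t, a <= g k t <= b) ->
  a < b -> 0 < delta -> (0 < n)%N ->
  let e := deviation_radius (b - a) #|K| n delta in
  measurable [set om | exists k, e < `|popE Dist (g k) - emp om (g k)|] /\
  (P [set om | exists k, (e < `|popE Dist (g k) - emp om (g k)|)%R] <= delta%:E)%E.
Proof.
move=> mg g_ab ab delta0 n0 e.
set dev := fun k => [set om | e < `|popE Dist (g k) - emp om (g k)|].
have mdev k : measurable (dev k) := measurable_deviation e (mg k).
have -> : [set om | exists k, e < `|popE Dist (g k) - emp om (g k)|]
    = \big[setU/set0]_k dev k.
  rewrite -bigcup_seq; apply/seteqP; split => om /= [k].
    by move=> ?; exists k => //; exact: mem_index_enum.
  by move=> _ ?; exists k.
split; first exact: bigsetU_measurable.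
have [delta1|delta_lt1] := leP 1 delta.
  apply: le_trans (probability_le1 _ _) _; last by rewrite lee_fin.
  exact: bigsetU_measurable.
have dev_le k : (P (dev k) <= (delta / #|K|%:R)%:E)%E.
  have K0 : (0 < #|K|)%N by apply/card_gt0P; exists k.
  have w0 : 0 < b - a by rewrite subr_gt0.
  have e0 := deviation_radius_gt0 w0 delta0 delta_lt1 K0 n0.
  apply: le_trans (hoeffding (mg k) (g_ab k) ab e0 n0) _.
  by rewrite lee_fin expR_deviation_radius.
apply: le_trans (measure_bigsetU_le _ _ _ mdev) _.
apply: (@le_trans _ _ (\sum_k (delta / #|K|%:R)%:E)%E).
  by apply: lee_sum => k _; exact: dev_le.
rewrite sumEFin lee_fin sumr_const -[#|xpredT|]/#|K|.
have [-> | K0] := eqVneq #|K| 0%N; first by rewrite mulr0n ltW.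
by rewrite -(mulr_natr (delta / _)) divfK // pnatr_eq0.
Qed.
End samples.

Section lagrangian.
Variables (R : realType) (T X : Type) (N d m : nat) (I : finType).
Variables (hyp : I -> X -> 'I_d -> R) (xof : T -> X) (yof : T -> 'I_d -> R).
Variables (br : 'I_N -> ('I_d -> R) -> 'I_m) (u : {ffun 'I_N -> 'I_m} -> ('I_d -> R) -> R).

Lemma sender_val_in01 z y : (forall a y, 0 <= u a y <= 1) -> 0 <= sender_val br u z y <= 1.
Proof.
move=> u01; rewrite /sender_val (bigD1 [ffun i => br i z]) //= big1 ?addr0.
  by rewrite /bjoint big1 ?mulr1 // => i _; rewrite /bi ffunE eqxx.
move=> a a_br; have [i a_i | a_eq] := pickP (fun i => a i != br i z).
  by rewrite /bjoint (bigD1 i) //= /bi eq_sym (negbTE a_i) mul0r mulr0.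
by case/eqP: a_br; apply/ffunP => i; rewrite ffunE; move/negbFE/eqP: (a_eq i).
Qed.

Lemma moment_term_bounds i j a (z y : 'I_d -> R) : `|z j| <= 1 -> `|y j| <= 1 ->
  -2 <= (z j - y j) * bi br i z a <= 2.
Proof.
rewrite /bi !ler_norml => /andP[? ?] /andP[? ?].
by case: (_ == _); rewrite ?mulr1 ?mulr0; apply/andP; split; lra.
Qed.

Lemma lagrangian_diff_le (gamma C : R) (E1 E2 : (T -> R) -> R) (w : I -> R)
    (lam : bool * 'I_N * 'I_d * 'I_m -> R) (e1 e2 : R) :
  in_simplex w -> in_LambdaC C lam -> 0 <= e2 ->
  (forall k, `|E1 (fun t => sender_val br u (hyp k (xof t)) (yof t))
              - E2 (fun t => sender_val br u (hyp k (xof t)) (yof t))| <= e1) ->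
  (forall k i j a,
     `|E1 (fun t => (hyp k (xof t) j - yof t j) * bi br i (hyp k (xof t)) a)
       - E2 (fun t => (hyp k (xof t) j - yof t j) * bi br i (hyp k (xof t)) a)| <= e2) ->
  `| lagrangian hyp xof yof br u gamma E1 w lam
     - lagrangian hyp xof yof br u gamma E2 w lam | <= e1 + C * e2.
Proof.
move=> [w0 w1] [lam0 lamC] e20 dev1 dev2.
have avg_le (f : I -> R) e : (forall k, `|f k| <= e) -> `|\sum_k w k * f k| <= e.
  move=> fe; apply: le_trans (ler_norm_sum _ _ _) _.
  rewrite -[leRHS]mul1r -w1 mulr_suml ler_sum // => k _.
  by rewrite normrM ger0_norm // ler_wpM2l.
rewrite /lagrangian.
set A1 := \sum_k w k * _; set A2 := \sum_k w k * _.
set B1 := \sum_q _; set B2 := \sum_q _.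
have -> : - A1 + B1 - (- A2 + B2) = (A2 - A1) + (B1 - B2) by ring.
apply: le_trans (ler_normD _ _) (lerD _ _).
  rewrite -sumrB; under eq_bigr do rewrite -mulrBr.
  by apply: avg_le => k; rewrite distrC.
rewrite -sumrB; apply: le_trans (ler_norm_sum _ _ _) _.
apply: (@le_trans _ _ (\sum_q lam q * e2)); last by rewrite -mulr_suml ler_wpM2r.
apply: ler_sum => -[[[s i] j] a] _.
rewrite -mulrBr -mulrBr opprB addrA subrK -sumrB normrM ger0_norm // ler_wpM2l //.
rewrite normrM (_ : `|sgn R s| = 1) ?mul1r; last by case: s; rewrite /sgn ?normrN normr1.
by under eq_bigr do rewrite -mulrBr; exact: avg_le.
Qed.
End lagrangian.

Lemma measurable_sender_val (R : realType) (dT : measure_display) (T : measurableType dT)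
    (N d m : nat) (br : 'I_N -> ('I_d -> R) -> 'I_m)
    (u : {ffun 'I_N -> 'I_m} -> ('I_d -> R) -> R) (z y : T -> 'I_d -> R) :
  (forall i a, measurable_fun setT (fun t => bi br i (z t) a)) ->
  (forall a, measurable_fun setT (fun t => u a (y t))) ->
  measurable_fun setT (fun t => sender_val br u (z t) (y t)).
Proof.
move=> mb mu; apply: measurable_sum => a; apply: measurable_funM => //.
by apply: measurable_prod => i _; exact: mb.
Qed.

Unset Implicit Arguments.

Theorem lemma3 (R : realType)
  (N d m : nat)
  (dT : measure_display) (T : measurableType dT) (X : Type)
  (xof : T -> X) (yof : T -> 'I_d -> R) (Dist : probability T R)
  (I : finType) (hyp : I -> X -> 'I_d -> R)
  (v : 'I_N -> 'I_m -> ('I_d -> R) -> R) (br : 'I_N -> ('I_d -> R) -> 'I_m)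
  (u : {ffun 'I_N -> 'I_m} -> ('I_d -> R) -> R) (gamma C delta : R) (n : nat)
  (dO : measure_display) (Omega : measurableType dO) (P : probability Omega R)
  (Z : 'I_n -> Omega -> T) :
  (* data: y in [-1,1]^d ; hypotheses h : X -> [-1,1]^d, H finite (injectively indexed by I) *)
  (forall t j, `|yof t j| <= 1) ->
  injective hyp ->
  (forall k x j, `|hyp k x j| <= 1) ->
  (* receiver utilities in [0,1], br = best response with a fixed tie-breaking *)
  (forall i a z, 0 <= v i a z <= 1) ->
  (forall i z a, v i a z <= v i (br i z) z) ->
  (* sender utility in [0,1] *)
  (forall a y, 0 <= u a y <= 1) ->
  0 <= gamma ->
  (* measurability of the quantities being averaged *)
  (forall j, measurable_fun setT (fun t => yof t j)) ->
  (forall k j, measurable_fun setT (fun t => hyp k (xof t) j)) ->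
  (forall k i a, measurable_fun setT (fun t => bi br i (hyp k (xof t)) a)) ->
  (forall a, measurable_fun setT (fun t => u a (yof t))) ->
  (0 < n)%N -> 0 < delta ->
  iid_samples P Dist Z ->
  exists E : set Omega, measurable E /\ (P E >= (1 - delta)%:E)%E /\
    forall om, E om ->
      forall (w : I -> R) (lam : bool * 'I_N * 'I_d * 'I_m -> R),
        in_simplex w -> in_LambdaC C lam ->
        `| lagrangian hyp xof yof br u gamma (popE Dist) w lam
           - lagrangian hyp xof yof br u gamma (empE (fun s => Z s om)) w lam |
        <= Num.sqrt (ln (4 * #|I|%:R / delta) / (2 * n%:R))
           + C * Num.sqrt (8 * ln (4 * #|I|%:R * N%:R * d%:R * m%:R / delta) / n%:R).
Proof.
move=> y1 _ h1 _ _ u01 _ my mh mb mu n0 delta0 iidZ.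
pose G (kq : I * ('I_N * 'I_d * 'I_m)) t :=
  (hyp kq.1 (xof t) kq.2.1.2 - yof t kq.2.1.2) * bi br kq.2.1.1 (hyp kq.1 (xof t)) kq.2.2.
have delta2 : 0 < delta / 2 by rewrite divr_gt0.
have [mB1 PB1] := hoeffding_union iidZ (fun k => measurable_sender_val (mb k) mu)
  (fun k t => sender_val_in01 br _ _ u01) ltr01 delta2 n0.
have [mB2 PB2] := hoeffding_union iidZ (g := G)
  (fun kq => measurable_funM (measurable_funB (mh _ _) (my _)) (mb _ _ _))
  (fun kq t => moment_term_bounds br _ _ (h1 _ _ _) (y1 _ _)) (gtrN (ltr0n R 2)) delta2 n0.
set B1 := [set om | _] in mB1 PB1; set B2 := [set om | _] in mB2 PB2.
exists (~` (B1 `|` B2)); split; first exact/measurableC/measurableU.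
split; first by rewrite [X in 1 - X](splitr delta); exact: probability_setCU_ge.
move=> om /not_orP[good1 good2] w lam w_simplex lam_Lambda.
have rad1 : deviation_radius (1 - 0) #|I| n (delta / 2)
    = Num.sqrt (ln (4 * #|I|%:R / delta) / (2 * n%:R)).
  by rewrite deviation_radius_half ?lt0r_neq0 // subr0 expr1n mul1r.
have rad2 : deviation_radius (2 - -2) #|{: I * ('I_N * 'I_d * 'I_m)}| n (delta / 2)
    = Num.sqrt (8 * ln (4 * #|I|%:R * N%:R * d%:R * m%:R / delta) / n%:R).
  rewrite deviation_radius_half ?lt0r_neq0 // !card_prod !card_ord !natrM !mulrA.
  by congr Num.sqrt; field; rewrite pnatr_eq0 -lt0n.
rewrite -rad1 -rad2; apply: lagrangian_diff_le => //; first exact: sqrtr_ge0.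
  by move=> k; rewrite leNgt; apply/negP => dev; apply: good1; exists k.
by move=> k i j a; rewrite leNgt; apply/negP => dev; apply: good2; exists (k, (i, j, a)).
Qed.
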